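(* Let $\Gamma$ be a $\Bbbk$-algebra, $\sim$ an equivalence relation on $\mathrm{cfs}(\Gamma)$, and $B\in\mathrm{cfs}(\Gamma)/{\sim}$. Then the Jacobson radical of $\hat\Gamma_B$ is $\mathrm{Rad}(\hat\Gamma_B)=\bigcap_{\mathfrak m\in B}\ker(\pi_{\mathfrak m})$.
   Context: $\mathrm{cfs}(\Gamma)$: maximal two-sided ideals $\mathfrak m$ with $\dim\Gamma/\mathfrak m<\infty$. For a class $B$, $\mathcal W(B)=\{\mathfrak m_1\cdots\mathfrak m_k:k\ge0,\mathfrak m_i\in B\}$, directed by reverse inclusion. $\hat\Gamma_B=\varprojlim_{\mathfrak m\in\mathcal W(B)}\Gamma/\mathfrak m$, and $\pi_{\mathfrak m}:\hat\Gamma_B\to\Gamma/\mathfrak m$ is the canonical projection. *)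

From HB Require Import structures.
From mathcomp Require Import all_boot all_algebra.
Set Implicit Arguments. Unset Strict Implicit. Unset Printing Implicit Defensive.
Import GRing.Theory.
Local Open Scope ring_scope.

Section Ideals.
Variable R : pzRingType.

Definition two_sided_ideal (I : R -> Prop) : Prop :=
  [/\ I 0, (forall x y, I x -> I y -> I (x - y)),
      (forall a x, I x -> I (a * x)) & (forall a x, I x -> I (x * a))].

Definition maximal_two_sided_ideal (I : R -> Prop) : Prop :=
  [/\ two_sided_ideal I, (exists x, ~ I x) &
      forall J, two_sided_ideal J -> (forall x, I x -> J x) ->
        (forall x, J x) \/ (forall x, J x -> I x)].

Definition ideal_mul (I J : R -> Prop) : R -> Prop := fun x =>
  exists n (a b : 'I_n -> R), (forall i, I (a i)) /\ (forall i, J (b i)) /\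
    x = \sum_(i < n) a i * b i.

Definition ideal_top : R -> Prop := fun _ => True.

(* W(B) = { m_1 ... m_k : k >= 0, m_i in B } (empty product = the whole ring) *)
Definition inW (B : (R -> Prop) -> Prop) (m : R -> Prop) : Prop :=
  exists s : seq (R -> Prop), foldr (fun I P => B I /\ P) True s /\
    forall x, m x <-> foldr ideal_mul ideal_top s x.

(* C is a coset a + I, i.e. an element of R / I *)
Definition is_coset (I C : R -> Prop) : Prop :=
  exists a, forall x, C x <-> I (x - a).

(* The inverse limit  lim_{m in W} R/m  (W directed by reverse inclusion):
   families (x_m)_m of cosets x_m in R/m, compatible with the canonical
   maps R/m -> R/m' for m ⊆ m' (which send the coset a+m to a+m' ⊇ a+m). *)
Record inv_limit (W : (R -> Prop) -> Prop) := InvLimit {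
  lim_fun :> (R -> Prop) -> R -> Prop;
  lim_coset : forall m, W m -> is_coset m (lim_fun m);
  lim_out : forall m, ~ W m -> forall x, ~ lim_fun m x;
  lim_compat : forall m m', W m -> W m' -> (forall x, m x -> m' x) ->
     forall x, lim_fun m x -> lim_fun m' x }.

Section LimitRing.
Variable W : (R -> Prop) -> Prop.
Local Notation L := (inv_limit W).

(* Ring structure of the limit, componentwise (described by its graph:
   z = x + y, z = x * y, z = 0, componentwise in every R/m, m in W). *)
Definition lim_is_zero (z : L) : Prop := forall m, W m -> z m 0.
Definition lim_is_add (x y z : L) : Prop :=
  forall m, W m -> forall a b, x m a -> y m b -> z m (a + b).
Definition lim_is_mul (x y z : L) : Prop :=
  forall m, W m -> forall a b, x m a -> y m b -> z m (a * b).

Definition lim_left_ideal (J : L -> Prop) : Prop :=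
  [/\ (forall z, lim_is_zero z -> J z),
      (forall x y z, J x -> J y -> lim_is_add x y z -> J z) &
      (forall a x z, J x -> lim_is_mul a x z -> J z)].

Definition lim_maximal_left_ideal (J : L -> Prop) : Prop :=
  [/\ lim_left_ideal J, (exists x, ~ J x) &
      forall J', lim_left_ideal J' -> (forall x, J x -> J' x) ->
        (forall x, J' x) \/ (forall x, J' x -> J x)].

Definition lim_jacobson_radical (x : L) : Prop :=
  forall J, lim_maximal_left_ideal J -> J x.

(* x in ker(pi_m): the m-component of x is the zero coset 0 + m = m *)
Definition in_ker_proj (m : R -> Prop) (x : L) : Prop :=
  forall a, x m a <-> m a.

End LimitRing.
End Ideals.

(* cofinite: dim_k (Gamma / m) < oo, i.e. finitely many elements span Gamma modulo m *)
Definition finite_codim (k : fieldType) (G : lmodType k) (m : G -> Prop) : Prop :=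
  exists s : seq G, forall x, exists c : 'I_(size s) -> k,
    m (x - \sum_(i < size s) c i *: s`_i).

Definition cfs (k : fieldType) (G : algType k) (m : G -> Prop) : Prop :=
  maximal_two_sided_ideal m /\ finite_codim m.

From mathcomp Require Import all_boot all_algebra.
From Stdlib Require Import Classical ClassicalEpsilon.
Set Implicit Arguments.
Unset Strict Implicit.
Unset Printing Implicit Defensive.
Import GRing.Theory.
Local Open Scope ring_scope.

(** If [pi_m x = 0] for every [m] in [B], then for any [r] the components of [r x] lie in
    every [m] of [B], hence are nilpotent modulo every product [m_1 ... m_k] of [W(B)], and
    [1 - r x] is invertible in the limit by the geometric series. A maximal left ideal [J]
    missing [x] would satisfy [J + L x = L], hence contain such an invertible [1 - r x].

    Conversely, if [pi_m x <> 0], then, [Gamma / m] being a finite-dimensional simple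
    algebra, its Jacobson radical is zero: some maximal left ideal [M] of [Gamma] above [m]
    misses [pi_m x], and the preimage of [M] under the surjection [pi_m] is a maximal left
    ideal of the limit missing [x]. *)

Section Ideals.
Variable R : pzRingType.
Implicit Types (I J M m : R -> Prop) (a b c x y : R).

Definition left_ideal I :=
  [/\ I 0, (forall x y, I x -> I y -> I (x - y)) & (forall a x, I x -> I (a * x))].

Definition maximal_left_ideal M :=
  [/\ left_ideal M, (exists x, ~ M x) &
      forall J, left_ideal J -> (forall x, M x -> J x) ->
        (forall x, J x) \/ (forall x, J x -> M x)].

Definition eqmod I a b := I (a - b).

Section LeftIdeal.
Variables (I : R -> Prop) (hI : left_ideal I).

Lemma left_ideal0 : I 0. Proof. by case: hI. Qed.

Lemma left_idealB x y : I x -> I y -> I (x - y).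
Proof. by case: hI => _ + _; apply. Qed.

Lemma left_idealN x : I x -> I (- x).
Proof. by move=> Ix; rewrite -sub0r; apply: left_idealB => //; apply: left_ideal0. Qed.

Lemma left_idealD x y : I x -> I y -> I (x + y).
Proof. by move=> Ix Iy; rewrite -[y]opprK; apply/left_idealB/left_idealN. Qed.

Lemma left_idealMl a x : I x -> I (a * x).
Proof. by case: hI => _ _; apply. Qed.

Lemma left_ideal_sum n (F : 'I_n -> R) : (forall i, I (F i)) -> I (\sum_(i < n) F i).
Proof.
by move=> IF; apply: (big_ind I) => //; [apply: left_ideal0 | apply: left_idealD].
Qed.

Lemma left_ideal_eqmod J a b : (forall x, J x -> I x) -> eqmod J a b -> I b -> I a.
Proof. by move=> JI Jab Ib; rewrite -[a](subrK b); apply/left_idealD/Ib/JI. Qed.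

End LeftIdeal.

Lemma two_sided_left_ideal I : two_sided_ideal I -> left_ideal I.
Proof. by case. Qed.

Lemma two_sided_idealMr I (hI : two_sided_ideal I) a x : I x -> I (x * a).
Proof. by case: hI => _ _ _; apply. Qed.

Section Congruence.
Variables (I : R -> Prop) (hI : two_sided_ideal I).
Let hIl := two_sided_left_ideal hI.

Lemma eqmod_refl a : eqmod I a a.
Proof. by rewrite /eqmod subrr; apply: (left_ideal0 hIl). Qed.

Lemma eqmod_sym a b : eqmod I a b -> eqmod I b a.
Proof. by move=> Hab; rewrite /eqmod -opprB; apply: (left_idealN hIl). Qed.

Lemma eqmod_trans b a c : eqmod I a b -> eqmod I b c -> eqmod I a c.
Proof. by move=> Hab Hbc; rewrite /eqmod -[a](subrK b) -addrA; apply: (left_idealD hIl). Qed.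

Lemma eqmodD a b c d : eqmod I a b -> eqmod I c d -> eqmod I (a + c) (b + d).
Proof. by move=> Hab Hcd; rewrite /eqmod opprD addrACA; apply: (left_idealD hIl). Qed.

Lemma eqmodN a b : eqmod I a b -> eqmod I (- a) (- b).
Proof. by rewrite /eqmod -opprD; apply: (left_idealN hIl). Qed.

Lemma eqmodB a b c d : eqmod I a b -> eqmod I c d -> eqmod I (a - c) (b - d).
Proof. by move=> Hab Hcd; apply: eqmodD Hab (eqmodN Hcd). Qed.

Lemma eqmodM a b c d : eqmod I a b -> eqmod I c d -> eqmod I (a * c) (b * d).
Proof.
move=> Hab Hcd; apply: (eqmod_trans (b := b * c)).
  by rewrite /eqmod -mulrBl; apply: two_sided_idealMr.
by rewrite /eqmod -mulrBr; apply: (left_idealMl hIl).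
Qed.

Lemma eqmod_memr a b : I b -> eqmod I a b <-> I a.
Proof.
move=> Ib; split=> [Iab | Ia]; last exact: (left_idealB hIl).
by rewrite -[a](subrK b); apply: (left_idealD hIl).
Qed.

Lemma eqmod_inverse_unique u a v : eqmod I (u * a) 1 -> eqmod I (a * v) 1 -> eqmod I u v.
Proof.
move=> ua1 av1; apply: (eqmod_trans (b := u * a * v)).
  by rewrite -mulrA -{1}[u]mulr1; apply/eqmodM/eqmod_sym/av1/eqmod_refl.
by rewrite -{2}[v]mul1r; apply/eqmodM/eqmod_refl.
Qed.

End Congruence.

Section MaximalLeftIdeal.
Variables (M : R -> Prop) (hM : maximal_left_ideal M).

Lemma maximal_left_ideal_left_ideal : left_ideal M.
Proof. by case: hM. Qed.

Lemma maximal_left_ideal_neq1 : ~ M 1.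
Proof.
case: hM => hMl [x Mx] _ M1; apply: Mx.
by rewrite -[x]mulr1; apply: left_idealMl.
Qed.

Lemma maximal_left_ideal_comax b : ~ M b -> exists d, M (1 - d * b).
Proof.
move=> Mb; case: hM => hMl _ Mmax.
pose K g := exists d, M (g - d * b).
have hK : left_ideal K.
  split.
  - by exists 0; rewrite mul0r subr0; apply: left_ideal0.
  - move=> x y [d1 Md1] [d2 Md2]; exists (d1 - d2).
    suff -> : x - y - (d1 - d2) * b = (x - d1 * b) - (y - d2 * b) by apply: left_idealB.
    by rewrite mulrBl !opprB addrACA [RHS]addrACA [- y + _]addrC.
  - by move=> a x [d Md]; exists (a * d); rewrite -mulrA -mulrBr; apply: left_idealMl.
have MK x : M x -> K x by exists 0; rewrite mul0r subr0.
case: (Mmax K hK MK) => [/(_ 1) // | KM].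
by case: Mb; apply: KM; exists 1; rewrite mul1r subrr; apply: left_ideal0.
Qed.

Lemma maximal_left_ideal_colon r : ~ M r -> maximal_left_ideal (fun z => M (z * r)).
Proof.
move=> Mr; have hMl := maximal_left_ideal_left_ideal.
split; [split | by exists 1; rewrite mul1r | ].
- by rewrite mul0r; apply: (left_ideal0 hMl).
- by move=> x y Mx My; rewrite mulrBl; apply: (left_idealB hMl).
- by move=> a x Mx; rewrite -mulrA; apply: (left_idealMl hMl).
move=> J hJ MJ; case: (classic (exists2 y, J y & ~ M (y * r))) => [[y Jy Myr] | noJ].
  left=> z; have [d Md] := maximal_left_ideal_comax Myr.
  rewrite -[z](subrK (z * r * d * y)); apply: (left_idealD hJ); last first.
    exact: (left_idealMl hJ).
  apply: MJ; suff -> : (z - z * r * d * y) * r = z * r * (1 - d * (y * r)).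
    exact: (left_idealMl hMl).
  by rewrite mulrBr mulr1 mulrBl !mulrA.
by right=> z Jz; apply: NNPP => Mzr; apply: noJ; exists z.
Qed.

End MaximalLeftIdeal.

Lemma maximal_two_sided_ideal_neq1 m : maximal_two_sided_ideal m -> ~ m 1.
Proof.
case=> hm [x mx] _ m1; apply: mx; rewrite -[x]mulr1.
exact: (left_idealMl (two_sided_left_ideal hm)).
Qed.

Lemma exists_maximal_left_ideal_avoiding m a :
  maximal_two_sided_ideal m ->
  (exists M, maximal_left_ideal M /\ forall x, m x -> M x) -> ~ m a ->
  exists M, [/\ maximal_left_ideal M, (forall x, m x -> M x) & ~ M a].
Proof.
move=> [hm _ mmax] [M0 [hM0 mM0]] ma; apply: NNPP => noM.
have Ma M : maximal_left_ideal M -> (forall x, m x -> M x) -> M a.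
  by move=> hM mM; apply: NNPP => Ma; apply: noM; exists M.
(* [T] is the largest two-sided ideal inside every maximal left ideal above [m]; it
   contains [a] because every colon ideal [(M : r)] is again such a maximal left ideal. *)
pose T t := forall M, maximal_left_ideal M -> (forall x, m x -> M x) -> forall r, M (t * r).
have hT : two_sided_ideal T.
  have hMl := maximal_left_ideal_left_ideal.
  split.
  - by move=> M hM _ r; rewrite mul0r; apply: left_ideal0 (hMl M hM).
  - move=> x y Tx Ty M hM mM r; rewrite mulrBl.
    by apply: (left_idealB (hMl M hM)); [apply: Tx | apply: Ty].
  - by move=> b x Tx M hM mM r; rewrite -mulrA; apply: (left_idealMl (hMl M hM)); apply: Tx.
  - by move=> b x Tx M hM mM r; rewrite -mulrA; apply: Tx.
have mT x : m x -> T x by move=> mx M hM mM r; apply/mM/(two_sided_idealMr hm).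
have Ta : T a.
  move=> M hM mM r; case: (classic (M r)) => [Mr | Mr].
    exact: (left_idealMl (maximal_left_ideal_left_ideal hM)).
  apply: (Ma _ (maximal_left_ideal_colon hM Mr)) => x mx.
  exact/mM/(two_sided_idealMr hm).
case: (mmax T hT mT) => [Tall | Tm]; last exact/ma/Tm.
by apply: (maximal_left_ideal_neq1 hM0); rewrite -[1]mulr1; apply: Tall.
Qed.

End Ideals.

Section FiniteCodimension.
Variables (k : fieldType) (G : algType k).
Implicit Types (I J M : G -> Prop).

Definition spans_mod I n (v : 'I_n -> G) :=
  forall x, exists c : 'I_n -> k, I (x - \sum_(i < n) c i *: v i).

Lemma left_idealZ I (hI : left_ideal I) c x : I x -> I (c *: x).
Proof. by move=> Ix; rewrite -mulr_algl; apply: left_idealMl. Qed.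

Lemma spans_mod_drop I J n (v : 'I_n.+1 -> G) y :
  left_ideal J -> (forall x, I x -> J x) -> J y -> ~ I y -> spans_mod I v ->
  exists j, spans_mod J (fun i => v (lift j i)).
Proof.
move=> hJ IJ Jy Iy Iv; have [cy Icy] := Iv y.
have [j cyj] : exists j, cy j != 0.
  apply: NNPP => cy0; apply: Iy; suff <- : y - \sum_(i < n.+1) cy i *: v i = y by [].
  rewrite big1 ?subr0 // => i _; case: (eqVneq (cy i) 0) => [-> | ?]; first exact: scale0r.
  by case: cy0; exists i.
exists j => x; have [c Ic] := Iv x; pose e := c j / cy j.
pose c' i := c i - e * cy i.
have c'j : c' j = 0 by rewrite /c' /e divfK // subrr.
exists (fun i => c' (lift j i)).
have -> : \sum_(i < n) c' (lift j i) *: v (lift j i) = \sum_(i < n.+1) c' i *: v i.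
  by rewrite (bigD1_ord j) //= c'j scale0r add0r.
have -> : \sum_(i < n.+1) c' i *: v i =
          \sum_(i < n.+1) c i *: v i - e *: \sum_(i < n.+1) cy i *: v i.
  by rewrite scaler_sumr -sumrB; apply: eq_bigr => i _; rewrite scalerBl scalerA.
have -> : x - (\sum_(i < n.+1) c i *: v i - e *: \sum_(i < n.+1) cy i *: v i) =
          (x - \sum_(i < n.+1) c i *: v i) - e *: (y - \sum_(i < n.+1) cy i *: v i) + e *: y.
  by rewrite -[RHS]addrA scalerBr [in RHS]opprB subrK opprB addrA addrAC.
apply: left_idealD => //; last exact: left_idealZ.
by apply: (left_idealB hJ); [apply: IJ | apply/(left_idealZ hJ)/IJ].
Qed.

Lemma exists_maximal_left_ideal_spans n (v : 'I_n -> G) I :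
  left_ideal I -> ~ I 1 -> spans_mod I v ->
  exists M, maximal_left_ideal M /\ forall x, I x -> M x.
Proof.
elim: n v I => [|n IHn] v I hI I1 Iv.
  by case: I1; have [c] := Iv 1; rewrite big_ord0 subr0.
case: (classic (exists J, [/\ left_ideal J, forall x, I x -> J x, ~ J 1 &
                              exists2 y, J y & ~ I y])) => [[J [hJ IJ J1 [y Jy Iy]]] | noJ].
  have [j Jv] := spans_mod_drop hJ IJ Jy Iy Iv.
  have [M [hM JM]] := IHn _ _ hJ J1 Jv.
  by exists M; split => // x /IJ /JM.
exists I; split=> //; split => //; first by exists 1.
move=> J hJ IJ; case: (classic (J 1)) => [J1 | J1].
  by left=> x; rewrite -[x]mulr1; apply: left_idealMl.
right=> x Jx; apply: NNPP => Ix; apply: noJ; exists J; split=> //; by exists x.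
Qed.

Lemma cfs_exists_maximal_left_ideal_avoiding m a : cfs m -> ~ m a ->
  exists M, [/\ maximal_left_ideal M, (forall x, m x -> M x) & ~ M a].
Proof.
move=> [hm [s ms]]; apply: exists_maximal_left_ideal_avoiding => //.
have [hm_ideal _ _] := hm.
apply: (@exists_maximal_left_ideal_spans _ (fun i => s`_i)) => //.
- exact: two_sided_left_ideal.
- exact: maximal_two_sided_ideal_neq1.
Qed.

End FiniteCodimension.

Section IdealProducts.
Variable R : pzRingType.
Implicit Types (I J m w : R -> Prop) (s : seq (R -> Prop)).

Definition ideal_prod s := foldr (@ideal_mul R) (@ideal_top R) s.

Lemma two_sided_ideal_ext I J : (forall x, I x <-> J x) -> two_sided_ideal J -> two_sided_ideal I.
Proof.
move=> IJ [J0 JB JMl JMr]; split.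
- exact/IJ.
- by move=> x y /IJ Jx /IJ Jy; apply/IJ/JB.
- by move=> a x /IJ Jx; apply/IJ/JMl.
- by move=> a x /IJ Jx; apply/IJ/JMr.
Qed.

Lemma ideal_mul_two_sided I J :
  two_sided_ideal I -> two_sided_ideal J -> two_sided_ideal (ideal_mul I J).
Proof.
move=> hI hJ; have hIl := two_sided_left_ideal hI; split.
- by exists 0%N, (fun=> 0), (fun=> 0); rewrite big_ord0; split=> [[]|] //; split=> [[]|].
- move=> x y [n1 [a1 [b1 [Ia1 [Jb1 ->]]]]] [n2 [a2 [b2 [Ia2 [Jb2 ->]]]]].
  exists (n1 + n2)%N, (fun i => match split i with inl j => a1 j | inr j => - a2 j end),
                      (fun i => match split i with inl j => b1 j | inr j => b2 j end).
  split; first by move=> i; case: (split i) => j //; exact: (left_idealN hIl).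
  split; first by move=> i; case: (split i).
  rewrite big_split_ord /= -sumrN.
  by congr (_ + _); apply: eq_bigr => i _; rewrite ?(unsplitK (inl i)) ?(unsplitK (inr i)) ?mulNr.
- move=> c x [n [a [b [Ia [Jb ->]]]]]; exists n, (fun i => c * a i), b.
  split; first by move=> i; apply: (left_idealMl hIl).
  by split=> //; rewrite mulr_sumr; apply: eq_bigr => i _; rewrite mulrA.
- move=> c x [n [a [b [Ia [Jb ->]]]]]; exists n, a, (fun i => b i * c).
  split=> //; split; first by move=> i; apply: two_sided_idealMr.
  by rewrite mulr_suml; apply: eq_bigr => i _; rewrite mulrA.
Qed.

Lemma ideal_mul_subl I J x : two_sided_ideal I -> ideal_mul I J x -> I x.
Proof.
move=> hI [n [a [b [Ia [_ ->]]]]].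
by apply: (left_ideal_sum (two_sided_left_ideal hI)) => i; apply: two_sided_idealMr.
Qed.

Lemma ideal_mul_subr I J x : left_ideal J -> ideal_mul I J x -> J x.
Proof.
by move=> hJ [n [a [b [_ [Jb ->]]]]]; apply: (left_ideal_sum hJ) => i; apply: left_idealMl.
Qed.

Lemma ideal_prod_two_sided s :
  (forall I, List.In I s -> two_sided_ideal I) -> two_sided_ideal (ideal_prod s).
Proof.
elim: s => [|I s IHs] hs //=.
by apply: ideal_mul_two_sided; [apply: hs; left | apply: IHs => J Js; apply: hs; right].
Qed.

Lemma ideal_prod_sub s x : (forall I, List.In I s -> two_sided_ideal I) ->
  ideal_prod s x -> forall I, List.In I s -> I x.
Proof.
elim: s x => [|J s IHs] x hs //= Jsx I [<- | Is].
  by apply: ideal_mul_subl Jsx; apply: hs; left.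
have hs' K : List.In K s -> two_sided_ideal K by move=> Ks; apply: hs; right.
apply: IHs (ideal_mul_subr _ Jsx) _ Is => //.
exact/two_sided_left_ideal/ideal_prod_two_sided.
Qed.

Lemma ideal_prod_expr s t : (forall I, List.In I s -> I t) -> ideal_prod s (t ^+ size s).
Proof.
elim: s => [|J s IHs] //= st.
exists 1%N, (fun=> t), (fun=> t ^+ size s); rewrite big_ord1 -exprS.
by split=> [_ | ]; [apply: st; left | split=> // _; apply: IHs => I Is; apply: st; right].
Qed.

Lemma foldr_andP (B : (R -> Prop) -> Prop) s :
  foldr (fun I P => B I /\ P) True s <-> forall I, List.In I s -> B I.
Proof.
elim: s => [|J s IHs] /=; first by split.
split=> [[BJ /IHs Bs] I [<- | /Bs] // | Bs]; split; first by apply: Bs; left.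
by apply/IHs => I Is; apply: Bs; right.
Qed.

Section ProductsOfB.
Variables (B : (R -> Prop) -> Prop) (hB : forall m, B m -> two_sided_ideal m).

Lemma inW_two_sided w : inW B w -> two_sided_ideal w.
Proof.
move=> [s [/foldr_andP Bs ws]]; apply: two_sided_ideal_ext ws _.
by apply: ideal_prod_two_sided => I /Bs; apply: hB.
Qed.

Lemma inW_of m : B m -> inW B m.
Proof.
move=> Bm; exists [:: m]; split=> //= x; split=> [mx | ]; last exact: ideal_mul_subl (hB Bm).
by exists 1%N, (fun=> x), (fun=> 1); rewrite big_ord1 mulr1.
Qed.

Lemma inW_nilpotent w t : inW B w ->
  (forall m, B m -> (forall x, w x -> m x) -> m t) -> exists N, w (t ^+ N).
Proof.
move=> [s [/foldr_andP Bs ws]] wt; exists (size s); apply/ws/ideal_prod_expr => I Is.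
apply: wt; first exact: Bs.
by move=> x /ws sx; apply: ideal_prod_sub sx _ Is => J /Bs; apply: hB.
Qed.

End ProductsOfB.
End IdealProducts.

Lemma one_sub_mul_geom_sum (R : pzRingType) (t : R) n :
  (1 - t) * \sum_(i < n) t ^+ i = 1 - t ^+ n.
Proof. by rewrite -opprB mulNr -subrX1 opprB. Qed.

Lemma geom_sum_mul_one_sub (R : pzRingType) (t : R) n :
  (\sum_(i < n) t ^+ i) * (1 - t) = 1 - t ^+ n.
Proof.
rewrite -one_sub_mul_geom_sum; apply/esym/commr_sum => i _.
by rewrite /GRing.comm mulrBl mulrBr mul1r mulr1 -exprS -exprSr.
Qed.

Section InverseLimit.
Variables (R : pzRingType) (W : (R -> Prop) -> Prop).
Hypothesis hW : forall w, W w -> two_sided_ideal w.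
Local Notation L := (inv_limit W).
Implicit Types (x y z : L) (w : R -> Prop) (f g r t u : (R -> Prop) -> R).

(* The limit carries no ring structure of its own: an element [x] is handled through a
   chosen representative [rep x w] of each component, and elements are built from
   threads, families of representatives compatible with the transition maps. *)
Definition rep x w : R := epsilon (inhabits 0) (x w).

Lemma rep_spec x w : W w -> x w (rep x w).
Proof.
move=> Ww; have [a xa] := lim_coset x Ww.
by apply: epsilon_spec; exists a; apply/xa; apply: eqmod_refl (hW Ww) a.
Qed.

Lemma lim_memE x w (Ww : W w) a : x w a <-> eqmod w a (rep x w).
Proof.
have [a0 xa0] := lim_coset x Ww; have hw := hW Ww.
have rep_a0 : eqmod w (rep x w) a0 by apply/xa0/rep_spec.
split=> [/xa0 a_a0 | a_rep]; last by apply/xa0; exact: (eqmod_trans hw a_rep rep_a0).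
exact: (eqmod_trans hw a_a0 (eqmod_sym hw rep_a0)).
Qed.

Definition thread f :=
  forall w w', W w -> W w' -> (forall a, w a -> w' a) -> eqmod w' (f w) (f w').

Lemma thread_rep x : thread (rep x).
Proof.
move=> w w' Ww Ww' ww'; apply/(lim_memE x Ww').
exact: (lim_compat Ww Ww' ww' (rep_spec x Ww)).
Qed.

Lemma thread_const c : thread (fun=> c).
Proof. by move=> w w' _ Ww' _; apply: eqmod_refl (hW Ww') c. Qed.

Lemma threadD f g : thread f -> thread g -> thread (fun w => f w + g w).
Proof.
move=> hf hg w w' Ww Ww' ww'.
exact: (eqmodD (hW Ww') (hf _ _ Ww Ww' ww') (hg _ _ Ww Ww' ww')).
Qed.

Lemma threadB f g : thread f -> thread g -> thread (fun w => f w - g w).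
Proof.
move=> hf hg w w' Ww Ww' ww'.
exact: (eqmodB (hW Ww') (hf _ _ Ww Ww' ww') (hg _ _ Ww Ww' ww')).
Qed.

Lemma threadM f g : thread f -> thread g -> thread (fun w => f w * g w).
Proof.
move=> hf hg w w' Ww Ww' ww'.
exact: (eqmodM (hW Ww') (hf _ _ Ww Ww' ww') (hg _ _ Ww Ww' ww')).
Qed.

Definition lim_of f (hf : thread f) : L.
Proof.
refine (@InvLimit R W (fun w a => W w /\ eqmod w a (f w)) _ _ _).
- by move=> w Ww; exists (f w) => a; split=> [[] | ].
- by move=> w Ww a [].
- move=> w w' Ww Ww' ww' a [_ a_fw]; split=> //.
  exact: (eqmod_trans (hW Ww') (ww' _ a_fw) (hf _ _ Ww Ww' ww')).
Defined.

Definition eqlim f g := forall w, W w -> eqmod w (f w) (g w).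

Lemma eqlim_refl f : eqlim f f.
Proof. by move=> w Ww; apply: (eqmod_refl (hW Ww) _). Qed.

Lemma eqlim_sym f g : eqlim f g -> eqlim g f.
Proof. by move=> fg w Ww; apply: (eqmod_sym (hW Ww) (fg w Ww)). Qed.

Lemma eqlim_trans g f h : eqlim f g -> eqlim g h -> eqlim f h.
Proof. by move=> fg gh w Ww; apply: (eqmod_trans (hW Ww) (fg w Ww) (gh w Ww)). Qed.

Lemma eqlimD f1 f2 g1 g2 :
  eqlim f1 f2 -> eqlim g1 g2 -> eqlim (fun w => f1 w + g1 w) (fun w => f2 w + g2 w).
Proof. by move=> f12 g12 w Ww; apply: (eqmodD (hW Ww) (f12 w Ww) (g12 w Ww)). Qed.

Lemma eqlimM f1 f2 g1 g2 :
  eqlim f1 f2 -> eqlim g1 g2 -> eqlim (fun w => f1 w * g1 w) (fun w => f2 w * g2 w).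
Proof. by move=> f12 g12 w Ww; apply: (eqmodM (hW Ww) (f12 w Ww) (g12 w Ww)). Qed.

Lemma eqlim_eq f g : (forall w, f w = g w) -> eqlim f g.
Proof. by move=> fg w Ww; rewrite fg; apply: (eqmod_refl (hW Ww) _). Qed.

Lemma rep_lim_of f (hf : thread f) : eqlim (rep (lim_of hf)) f.
Proof. by move=> w Ww; have [] := rep_spec (lim_of hf) Ww. Qed.

Lemma lim_graphE (op : R -> R -> R) x y z :
  (forall w, W w -> forall a b c d, eqmod w a b -> eqmod w c d -> eqmod w (op a c) (op b d)) ->
  (forall w, W w -> forall a b, x w a -> y w b -> z w (op a b)) <->
  eqlim (rep z) (fun w => op (rep x w) (rep y w)).
Proof.
move=> opP; split=> [xyz w Ww | zxy w Ww a b xa yb].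
  apply: (eqmod_sym (hW Ww)); apply/(lim_memE z Ww).
  exact: (xyz w Ww _ _ (rep_spec x Ww) (rep_spec y Ww)).
apply/(lim_memE z Ww); apply: (eqmod_trans (hW Ww) _ (eqmod_sym (hW Ww) (zxy w Ww))).
by apply: opP => //; apply/lim_memE.
Qed.

Lemma lim_is_zeroE z : lim_is_zero z <-> eqlim (rep z) (fun=> 0).
Proof.
split=> [z0 w Ww | z0 w Ww]; last first.
  by apply/(lim_memE z Ww); exact: (eqmod_sym (hW Ww) (z0 w Ww)).
by apply: (eqmod_sym (hW Ww)); apply/(lim_memE z Ww)/z0.
Qed.

Lemma lim_is_addE x y z : lim_is_add x y z <-> eqlim (rep z) (fun w => rep x w + rep y w).
Proof. by apply: (lim_graphE (op := +%R)) => w Ww; exact: (eqmodD (hW Ww)). Qed.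

Lemma lim_is_mulE x y z : lim_is_mul x y z <-> eqlim (rep z) (fun w => rep x w * rep y w).
Proof. by apply: (lim_graphE (op := *%R)) => w Ww; exact: (eqmodM (hW Ww)). Qed.

Lemma in_ker_projE w x : W w -> in_ker_proj w x <-> w (rep x w).
Proof.
move=> Ww; split=> [xw | wx a]; first exact/xw/rep_spec.
by rewrite (lim_memE x Ww) (eqmod_memr (hW Ww)).
Qed.

Section LimitLeftIdeal.
Variables (J : L -> Prop) (hJ : lim_left_ideal J).

Definition rep_in f := exists2 j, J j & eqlim (rep j) f.

Lemma rep_in_eqlim f g : rep_in f -> eqlim f g -> rep_in g.
Proof. by move=> [j Jj jf] fg; exists j => //; apply: eqlim_trans jf fg. Qed.

Lemma rep_in0 : rep_in (fun=> 0).
Proof.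
exists (lim_of (thread_const 0)); last exact: rep_lim_of.
by case: hJ => J0 _ _; apply/J0/lim_is_zeroE; apply: rep_lim_of.
Qed.

Lemma rep_inD f g : rep_in f -> rep_in g -> rep_in (fun w => f w + g w).
Proof.
move=> [j1 Jj1 j1f] [j2 Jj2 j2g].
pose s := lim_of (threadD (thread_rep j1) (thread_rep j2)).
exists s; last exact: (eqlim_trans (rep_lim_of _) (eqlimD j1f j2g)).
by case: hJ => _ JD _; apply: (JD _ _ _ Jj1 Jj2); apply/lim_is_addE; apply: rep_lim_of.
Qed.

Lemma rep_inM r f : thread r -> rep_in f -> rep_in (fun w => r w * f w).
Proof.
move=> hr [j Jj jf]; pose p := lim_of (threadM hr (thread_rep j)).
exists p; last exact: (eqlim_trans (rep_lim_of _) (eqlimM (eqlim_refl r) jf)).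
case: hJ => _ _ JM; apply: (JM (lim_of hr) _ _ Jj); apply/lim_is_mulE.
exact: (eqlim_trans (rep_lim_of _) (eqlimM (eqlim_sym (rep_lim_of hr)) (eqlim_refl _))).
Qed.

Lemma rep_inP z : rep_in (rep z) <-> J z.
Proof.
split=> [[j Jj jz] | Jz]; last by exists z => //; apply: eqlim_refl.
case: hJ => _ _ JM; apply: (JM (lim_of (thread_const 1)) _ _ Jj); apply/lim_is_mulE.
apply: (eqlim_trans (eqlim_sym jz)); apply: eqlim_sym.
apply: (eqlim_trans (eqlimM (rep_lim_of (thread_const 1)) (eqlim_refl (rep j)))).
by apply: eqlim_eq => w; rewrite mul1r.
Qed.

Lemma rep_in_unit u f : thread u -> rep_in f -> eqlim (fun w => u w * f w) (fun=> 1) ->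
  forall z, J z.
Proof.
move=> hu Jf uf1 z; apply/rep_inP.
have Jzuf := rep_inM (threadM (thread_rep z) hu) Jf.
apply: (rep_in_eqlim Jzuf).
apply: (eqlim_trans (g := fun w => rep z w * (u w * f w))).
  by apply: eqlim_eq => w; rewrite mulrA.
apply: (eqlim_trans (eqlimM (eqlim_refl (rep z)) uf1)).
by apply: eqlim_eq => w; rewrite mulr1.
Qed.

End LimitLeftIdeal.

Lemma lim_maximal_left_ideal_comax J x : lim_maximal_left_ideal J -> ~ J x ->
  exists2 r, thread r & rep_in J (fun w => 1 - r w * rep x w).
Proof.
move=> [hJ _ Jmax] Jx.
(* [K] is [J + L x]. *)
pose K z := exists2 r, thread r & rep_in J (fun w => rep z w - r w * rep x w).
have hK : lim_left_ideal K.
  split.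
  - move=> z /lim_is_zeroE z0; exists (fun=> 0); first exact: thread_const.
    apply: (rep_in_eqlim (rep_in0 hJ)); apply: (eqlim_trans (eqlim_sym z0)).
    by apply: eqlim_eq => w; rewrite mul0r subr0.
  - move=> z1 z2 z [r1 hr1 Jr1] [r2 hr2 Jr2] /lim_is_addE z12.
    exists (fun w => r1 w + r2 w); first exact: threadD.
    apply: (rep_in_eqlim (rep_inD hJ Jr1 Jr2)).
    apply: (eqlim_trans (g := fun w => rep z1 w + rep z2 w - (r1 w + r2 w) * rep x w)).
      by apply: eqlim_eq => w; rewrite mulrDl opprD addrACA.
    exact: (eqlimD (eqlim_sym z12) (eqlim_refl _)).
  - move=> a z1 z [r hr Jr] /lim_is_mulE az.
    exists (fun w => rep a w * r w); first exact: (threadM (thread_rep a) hr).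
    apply: (rep_in_eqlim (rep_inM hJ (thread_rep a) Jr)).
    apply: (eqlim_trans (g := fun w => rep a w * rep z1 w - rep a w * r w * rep x w)).
      by apply: eqlim_eq => w; rewrite mulrBr mulrA.
    exact: (eqlimD (eqlim_sym az) (eqlim_refl _)).
have JK z : J z -> K z.
  move=> Jz; exists (fun=> 0); first exact: thread_const.
  apply: (rep_in_eqlim ((rep_inP hJ z).2 Jz)).
  by apply: eqlim_eq => w; rewrite mul0r subr0.
case: (Jmax K hK JK) => [Kall | KJ]; last first.
  case: Jx; apply: KJ; exists (fun=> 1); first exact: thread_const.
  apply: (rep_in_eqlim (rep_in0 hJ)).
  by apply: eqlim_eq => w; rewrite mul1r subrr.
have [r hr Jr] := Kall (lim_of (thread_const 1)); exists r => //.
apply: (rep_in_eqlim Jr).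
exact: (eqlimD (rep_lim_of _) (eqlim_refl _)).
Qed.

Lemma thread_one_sub_inverse t : thread t -> (forall w, W w -> exists N, w (t w ^+ N)) ->
  exists2 u, thread u & eqlim (fun w => u w * (1 - t w)) (fun=> 1).
Proof.
move=> ht tnil; pose N w := epsilon (inhabits 0%N) (fun N => w (t w ^+ N)).
have wtN w : W w -> w (t w ^+ N w).
  by move=> Ww; apply: (epsilon_spec _ _ (tnil w Ww)).
pose u w := \sum_(i < N w) t w ^+ i.
have one_sub_tN w : W w -> eqmod w (1 - t w ^+ N w) 1.
  move=> Ww; rewrite /eqmod addrAC subrr add0r.
  exact: (left_idealN (two_sided_left_ideal (hW Ww)) (wtN w Ww)).
have ut w : W w -> eqmod w (u w * (1 - t w)) 1.
  by move=> Ww; rewrite geom_sum_mul_one_sub; apply: one_sub_tN.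
(* [u w] and [u w'] are both left inverses of [1 - t w'] modulo [w'], which also has a
   right inverse. *)
exists u => // w w' Ww Ww' ww'; have hw' := hW Ww'.
apply: (eqmod_inverse_unique hw' (a := 1 - t w')); last first.
  by rewrite one_sub_mul_geom_sum; apply: one_sub_tN.
have tw't : eqmod w' (1 - t w') (1 - t w).
  exact: (eqmodB hw' (eqmod_refl hw' 1) (eqmod_sym hw' (ht _ _ Ww Ww' ww'))).
exact: (eqmod_trans hw' (eqmodM hw' (eqmod_refl hw' _) tw't) (ww' _ (ut w Ww))).
Qed.

Lemma lim_maximal_left_ideal_preim w M : W w -> maximal_left_ideal M -> (forall a, w a -> M a) ->
  lim_maximal_left_ideal (fun y : L => M (rep y w)).
Proof.
move=> Ww hM wM; have hMl := maximal_left_ideal_left_ideal hM.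
have M_eqmod a b : eqmod w a b -> M b -> M a by exact: (left_ideal_eqmod hMl wM).
split.
- split.
  + by move=> z /lim_is_zeroE z0; apply: (M_eqmod _ _ (z0 w Ww) (left_ideal0 hMl)).
  + move=> x y z Mx My /lim_is_addE xyz.
    by apply: (M_eqmod _ _ (xyz w Ww)); apply: left_idealD.
  + move=> a x z Mx /lim_is_mulE axz.
    by apply: (M_eqmod _ _ (axz w Ww)); apply: left_idealMl.
- exists (lim_of (thread_const 1)) => M1; apply: (maximal_left_ideal_neq1 hM).
  exact: (M_eqmod _ _ (eqmod_sym (hW Ww) (rep_lim_of (thread_const 1) Ww)) M1).
move=> J' hJ' MJ'.
case: (classic (exists2 y, J' y & ~ M (rep y w))) => [[y J'y My] | noJ']; last first.
  by right=> z J'z; apply: NNPP => Mz; apply: noJ'; exists z.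
left=> z; have [d Md] := maximal_left_ideal_comax hM My.
pose e v := rep z v * (1 - d * rep y v).
have he : thread e.
  apply: (threadM (thread_rep z)); apply: (threadB (thread_const 1)).
  exact: (threadM (thread_const d) (thread_rep y)).
have J'e : rep_in J' e.
  apply: (rep_in_eqlim _ (rep_lim_of he)); apply/(rep_inP hJ')/MJ'.
  exact: (M_eqmod _ _ (rep_lim_of he Ww) (left_idealMl hMl _ Md)).
have J'dy : rep_in J' (fun v => rep z v * d * rep y v).
  exact: (rep_inM hJ' (threadM (thread_rep z) (thread_const d)) ((rep_inP hJ' y).2 J'y)).
apply/(rep_inP hJ')/(rep_in_eqlim (rep_inD hJ' J'e J'dy)).
by apply: eqlim_eq => v; rewrite /e mulrBr mulr1 mulrA subrK.
Qed.

End InverseLimit.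

Lemma lim_jacobson_radical_of_ker (R : pzRingType) (B : (R -> Prop) -> Prop)
  (hB : forall m, B m -> two_sided_ideal m) (x : inv_limit (inW B)) :
  (forall m, B m -> in_ker_proj m x) -> lim_jacobson_radical x.
Proof.
move=> xker J hJmax; have [hJ [z Jz] _] := hJmax; apply: NNPP => Jx; apply: Jz.
have hW := inW_two_sided hB.
have [r hr Jr] := lim_maximal_left_ideal_comax hW hJmax Jx.
have ht := threadM hW hr (thread_rep hW x).
have tnil w : inW B w -> exists N, w ((r w * rep x w) ^+ N).
  move=> Ww; apply: (inW_nilpotent hB Ww) => m Bm wm.
  apply: (left_idealMl (two_sided_left_ideal (hB m Bm))).
  apply/(xker m Bm).
  exact: (lim_compat Ww (inW_of hB Bm) wm (rep_spec hW x Ww)).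
have [u hu ut] := thread_one_sub_inverse hW ht tnil.
exact: (rep_in_unit hW hJ hu Jr ut).
Qed.

Lemma in_ker_proj_of_lim_jacobson_radical (k : fieldType) (G : algType k)
  (W : (G -> Prop) -> Prop) (hW : forall w, W w -> two_sided_ideal w) w (x : inv_limit W) :
  W w -> cfs w -> lim_jacobson_radical x -> in_ker_proj w x.
Proof.
move=> Ww cfs_w xrad; apply/(in_ker_projE hW x Ww); apply: NNPP => wx.
have [M [hM wM Mx]] := cfs_exists_maximal_left_ideal_avoiding cfs_w wx.
exact/Mx/(xrad _ (lim_maximal_left_ideal_preim hW Ww hM wM)).
Qed.

Theorem mainTheorem20 (k : fieldType) (G : algType k)
  (sim : (G -> Prop) -> (G -> Prop) -> Prop)
  (sim_refl : forall m, cfs m -> sim m m)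
  (sim_sym : forall m m', cfs m -> cfs m' -> sim m m' -> sim m' m)
  (sim_trans : forall m1 m2 m3, cfs m1 -> cfs m2 -> cfs m3 ->
                 sim m1 m2 -> sim m2 m3 -> sim m1 m3)
  (B : (G -> Prop) -> Prop) (m0 : G -> Prop) (Hm0 : cfs m0)
  (HB : forall m, B m <-> cfs m /\ sim m0 m) :
  forall x : inv_limit (inW B),
    lim_jacobson_radical x <-> (forall m, B m -> in_ker_proj m x).
Proof.
have cfsB m : B m -> cfs m by move=> /HB [].
have hB m : B m -> two_sided_ideal m by move=> /cfsB [[]].
move=> x; split=> [xrad m Bm | ]; last exact: lim_jacobson_radical_of_ker.
exact: (in_ker_proj_of_lim_jacobson_radical (inW_two_sided hB) (inW_of hB Bm) (cfsB m Bm) xrad).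
Qed.
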